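(* Consider a one-hidden-layer network with $M$ hidden neurons, weight vectors $w_1,\dots,w_M\in\mathbb{R}^N$ and biases $b_1,\dots,b_M$, with input $x\in\mathbb{R}^N$ and perturbation $e\in\mathbb{R}^N$ with $\|e\|_\infty\le\delta$. Assume: (1) $\|x\|_2=1$ and $\|x\|_\infty=o(1)$ as $N\to\infty$; (2) $\delta\le |b_i|/\|w_i\|_1-C$ for all $i=1,\dots,M$, for some constant $C>0$ independent of $N$; (3) $M=\omega(1)$ as $N\to\infty$; (4) for each $i$, the entries $w_i[k]$, $k=1,\dots,N$, are i.i.d. with zero mean and variance $\sigma_i^2=\Theta(1)$. Let $S=\{i:|w_i^Tx-b_i|>|w_i^Te|\}$. Then $\lim_{N\to\infty}\Pr\left(|S|/M=1-o(1)\right)=1$.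
   Context: Asymptotic notation: $f=\Theta(g)$ if $C_1<|f/g|<C_2$ for constants $C_1,C_2>0$; $f=o(g)$ if $|f/g|\to0$; $f=\omega(g)$ if $g=o(f)$. For a neuron $i\in S$, the ReLU switch $s_i=\mathbb{1}\{w_i^Tx-b_i>0\}$ is unchanged when $x$ is replaced by $x+e$ (the ''high SNR'' condition). *)

From HB Require Import structures.
From mathcomp Require Import all_boot all_order all_algebra.
From mathcomp Require Import all_classical all_reals all_analysis.
Set Implicit Arguments. Unset Strict Implicit. Unset Printing Implicit Defensive.
Import Order.TTheory GRing.Theory Num.Theory.
Import numFieldNormedType.Exports.
Local Open Scope classical_set_scope.
Local Open Scope ring_scope.

Section Vectors.
Context {R : realType} {N : nat}.
Definition dotp (u v : 'I_N -> R) : R := \sum_(k < N) u k * v k.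
Definition norm1 (u : 'I_N -> R) : R := \sum_(k < N) `|u k|.
Definition norm2 (u : 'I_N -> R) : R := Num.sqrt (\sum_(k < N) u k ^+ 2).
Definition normInf (u : 'I_N -> R) : R := \big[Num.max/0]_(k < N) `|u k|.
End Vectors.

Definition robust_set {R : realType} (N M : nat) (w : 'I_M -> 'I_N -> R)
    (b : 'I_M -> R) (x e : 'I_N -> R) : {set 'I_M} :=
  [set i : 'I_M | `|dotp (w i) e| < `|dotp (w i) x - b i|].

(* Mutual independence of a finite family of real random variables:
   product rule for every family of Borel sets (sub-families are obtained
   by taking B k = setT). *)
Definition mutually_independent {d} {T : measurableType d} {R : realType}
    (P : probability T R) (n : nat) (X : 'I_n -> {RV P >-> R}) : Prop :=
  forall B : 'I_n -> set R, (forall k, measurable (B k)) ->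
    P (\big[setI/setT]_(k < n) (X k @^-1` B k)) =
    (\big[*%E/1%E]_(k < n) P (X k @^-1` B k))%E.

Definition identically_distributed {d} {T : measurableType d} {R : realType}
    (P : probability T R) (n : nat) (X : 'I_n -> {RV P >-> R}) : Prop :=
  forall k k' (A : set R), measurable A ->
    distribution P (X k) A = distribution P (X k') A.

(** Condition (2) alone puts every neuron in S, for every realisation of the
    weights outside a null set, once N is so large that ||x||_oo < C.  Indeed
    |w^T v| <= ||w||_1 ||v||_oo gives
    |w_i^T e| <= delta ||w_i||_1 <= |b_i| - C ||w_i||_1 < |b_i| - |w_i^T x|
    <= |w_i^T x - b_i|.
    Hence Pr(|S| = M) = 1 eventually and the o(1) term can be taken to be 0. *)
From HB Require Import structures.
From mathcomp Require Import all_boot all_order all_algebra.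
From mathcomp Require Import all_classical all_reals all_analysis.
From mathcomp Require Import lra.
Import Order.TTheory GRing.Theory Num.Theory.
Import numFieldNormedType.Exports.
Local Open Scope classical_set_scope.
Local Open Scope ring_scope.

Section Norms.
Context {R : realType} {N : nat}.
Implicit Types u v : 'I_N -> R.

Lemma normInf_ge0 u : 0 <= normInf u.
Proof. exact: bigmax_ge_id. Qed.

Lemma ler_normInf u k : `|u k| <= normInf u.
Proof. exact: (le_bigmax 0 (fun k => `|u k|) k). Qed.

Lemma norm1_ge0 u : 0 <= norm1 u.
Proof. exact: sumr_ge0. Qed.

Lemma normr_dotp_le u v : `|dotp u v| <= norm1 u * normInf v.
Proof.
rewrite /dotp /norm1 mulr_suml (le_trans (ler_norm_sum _ _ _)) //.
apply: ler_sum => k _; rewrite normrM ler_wpM2l //; exact: ler_normInf.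
Qed.

Lemma robust_neuron (w x e : 'I_N -> R) (b delta C : R) :
  normInf e <= delta -> normInf x < C -> delta <= `|b| / norm1 w - C ->
  `|dotp w e| < `|dotp w x - b|.
Proof.
move=> He Hx Hd.
have e_ge0 := normInf_ge0 e; have x_ge0 := normInf_ge0 x.
have w_gt0 : 0 < norm1 w.
  rewrite lt_def norm1_ge0 andbT; apply: contraTneq Hd => ->.
  rewrite invr0 mulr0 sub0r -ltNge; lra.
have delta_le : norm1 w * delta <= `|b| - norm1 w * C.
  by rewrite -(ler_pM2l w_gt0) mulrBr mulrCA divff ?gt_eqF // mulr1 in Hd.
have := normr_dotp_le w e; have := normr_dotp_le w x.
have : norm1 w * normInf e <= norm1 w * delta by rewrite ler_pM2l.
have : norm1 w * normInf x < norm1 w * C by rewrite ltr_pM2l.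
have := lerB_dist b (dotp w x); rewrite distrC; lra.
Qed.

End Norms.

Lemma robust_set_full (R : realType) (N M : nat) (w : 'I_M -> 'I_N -> R)
    (b : 'I_M -> R) (x e : 'I_N -> R) (delta C : R) :
  normInf e <= delta -> normInf x < C ->
  (forall i, delta <= `|b i| / norm1 (w i) - C) ->
  robust_set w b x e = [set: 'I_M]%SET.
Proof.
move=> He Hx Hd; apply/setP => i; rewrite !inE.
exact: robust_neuron He Hx (Hd i).
Qed.

Lemma card_ratio_ge1 (R : realFieldType) (M : nat) (S : {set 'I_M}) :
  (0 < M)%N -> (1 <= #|S|%:R / M%:R :> R) = (S == [set: 'I_M]%SET).
Proof.
move=> M_gt0; rewrite ler_pdivlMr ?ltr0n // mul1r ler_nat.
by rewrite eqEcard finset.subsetT cardsT card_ord.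
Qed.

Section Measurability.
Context {d : measure_display} {T : measurableType d} {R : realType}.

Lemma measurable_fun_dotp (N : nat) (u v : 'I_N -> T -> R) :
  (forall k, measurable_fun setT (u k)) -> (forall k, measurable_fun setT (v k)) ->
  measurable_fun setT (fun t => dotp (fun k => u k t) (fun k => v k t)).
Proof.
move=> mu mv; apply: measurable_sum => k.
exact: measurable_realfun.measurable_funM.
Qed.

Lemma measurable_robust_set_full (N M : nat) (w : 'I_M -> 'I_N -> T -> R)
    (b : 'I_M -> T -> R) (x : 'I_N -> R) (e : 'I_N -> T -> R) :
  (forall i k, measurable_fun setT (w i k)) ->
  (forall i, measurable_fun setT (b i)) ->
  (forall k, measurable_fun setT (e k)) ->
  measurable [set t | robust_set (fun i k => w i k t) (fun i => b i t) x
                                 (fun k => e k t) == [set: 'I_M]%SET].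
Proof.
move=> mw mb me.
have -> : [set t | robust_set (fun i k => w i k t) (fun i => b i t) x
                     (fun k => e k t) == [set: 'I_M]%SET] =
    \bigcap_(i in [set: 'I_M])
      [set t | `|dotp (fun k => w i k t) (fun k => e k t)| <
               `|dotp (fun k => w i k t) x - b i t|].
  apply/seteqP; split => t /=.
  - by move=> /eqP full i _; move: (finset.in_setT i); rewrite -full inE.
  - by move=> robust; apply/eqP/setP => i; rewrite !inE; exact: robust.
apply: fin_bigcap_measurable; first exact: finite_finset.
move=> i _; rewrite -[X in measurable X]setTI.
apply: (measurable_realfun.measurable_fun_ltr _ _ measurableT (Y := [set true])) => //.
- apply: measurableT_comp; first exact: measurable_realfun.normr_measurable.
  exact: measurable_fun_dotp.
- apply: measurableT_comp; first exact: measurable_realfun.normr_measurable.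
  apply: measurable_realfun.measurable_funB => //.
  exact: measurable_fun_dotp.
Qed.

Lemma probability_ae1 (P : probability T R) (A : set T) :
  measurable A -> {ae P, forall t, A t} -> P A = 1%E.
Proof.
move=> mA /(negligibleP _ (measurableC mA)) PnA.
rewrite -[A]setCK probability_setC; last exact: measurableC.
by rewrite PnA sube0.
Qed.

End Measurability.

Theorem theorem3 (R : realType) (d : measure_display) (T : measurableType d)
  (P : probability T R)
  (M : nat -> nat)
  (w : forall N : nat, 'I_(M N) -> 'I_N -> {RV P >-> R})
  (b : forall N : nat, 'I_(M N) -> {RV P >-> R})
  (x : forall N : nat, 'I_N -> R)
  (e : forall N : nat, 'I_N -> {RV P >-> R})
  (delta : nat -> R) (C : R) (sigma : forall N : nat, 'I_(M N) -> R) :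
  (* perturbation: ||e||_oo <= delta *)
  (\forall N \near \oo, forall t : T, normInf (fun k => e N k t) <= delta N) ->
  (* (1) ||x||_2 = 1 and ||x||_oo = o(1) *)
  (\forall N \near \oo, norm2 (x N) = 1) ->
  (fun N => normInf (x N)) @ \oo --> (0 : R) ->
  (* (2) delta <= |b_i| / ||w_i||_1 - C for all i, with C > 0 independent of N *)
  0 < C ->
  (\forall N \near \oo, {ae P, forall t : T, forall i : 'I_(M N),
      delta N <= `|b N i t| / norm1 (fun k => w N i k t) - C}) ->
  (* (3) M = omega(1) *)
  (forall K : nat, \forall N \near \oo, (K <= M N)%N) ->
  (* (4) for each i, entries i.i.d., zero mean, variance sigma_i^2 = Theta(1) *)
  (forall N (i : 'I_(M N)), mutually_independent (w N i) /\
                            identically_distributed (w N i)) ->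
  (forall N (i : 'I_(M N)) (k : 'I_N),
      P.-integrable setT (EFin \o w N i k) /\
      ('E_P[w N i k] = 0)%E /\ ('V_P[w N i k] = ((sigma N i) ^+ 2)%:E)%E) ->
  (exists C1 C2 : R, 0 < C1 /\ 0 < C2 /\
     forall N (i : 'I_(M N)), C1 < sigma N i ^+ 2 < C2) ->
  (* conclusion: Pr(|S|/M >= 1 - o(1)) -> 1 *)
  exists eps : nat -> R, eps @ \oo --> (0 : R) /\
    (fun N => P [set t | 1 - eps N <=
        (#|robust_set (fun i k => w N i k t) (fun i => b N i t) (x N)
                       (fun k => e N k t)|%:R / (M N)%:R)])
      @ \oo --> 1%E.
Proof.
move=> e_le _ x_o1 C_gt0 b_margin M_unbounded _ _ _.
exists (fun=> 0); split; first exact: cvg_cst.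
apply: cvg_near_cst.
have x_ltC : \forall N \near \oo, normInf (x N) < C := cvgr_lt 0 x_o1 C C_gt0.
near=> N.
have M_gt0 : (0 < M N)%N by near: N; exact: M_unbounded 1%N.
under eq_set => t do rewrite subr0 card_ratio_ge1 //.
apply: probability_ae1.
  by apply: measurable_robust_set_full => *; exact: measurable_funPT.
have HeN : forall t, normInf (fun k => e N k t) <= delta N by near: N; exact: e_le.
have HxN : normInf (x N) < C by near: N; exact: x_ltC.
have HbN : {ae P, forall t i,
    delta N <= `|b N i t| / norm1 (fun k => w N i k t) - C}.
  by near: N; exact: b_margin.
apply: filterS HbN => t HbNt.
by apply/eqP; exact: robust_set_full (HeN t) HxN HbNt.
Unshelve. all: end_near.
Qed.
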